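(* Let $q\ge2$, $t,b\ge1$ and $n\ge bt+1$. Then \[ d_{q,b}(n,t)=\sum_{i=0}^{q-1}d_{q,b}(n-ib-1,t-i). \]
   Context: $\Sigma_q=\{0,\ldots,q-1\}$. A $b$-burst-deletion at position $i\in[1,n-b+1]$ transforms $x_1\cdots x_n$ into $x_1\cdots x_{i-1}x_{i+b}\cdots x_n$. For $n\ge tb+1$, $t\ge0$, $\mathcal{D}_{t,b}(\boldsymbol{x})$ is the set of all length-$(n-tb)$ sequences obtainable from $\boldsymbol{x}$ by $t$ successive $b$-burst-deletions ($\mathcal{D}_{0,b}(\boldsymbol{x})=\{\boldsymbol{x}\}$). The $b$-cyclic sequence $\boldsymbol{X}^{\sigma}_{m,q,b}=X_1\cdots X_m$ has $X_i\equiv\sigma+\lfloor (i-1)/b\rfloor\pmod q$. For $m\ge bs+1$, $s\ge0$, $d_{q,b}(m,s):=|\mathcal{D}_{s,b}(\boldsymbol{X}^0_{m,q,b})|$; $d_{q,b}(m,s)=1$ if $m=bs\ge0$, and $d_{q,b}(m,s)=0$ if $m<bs$ or $s<0$. *)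

From mathcomp Require Import all_boot all_order all_algebra.
Set Implicit Arguments. Unset Strict Implicit. Unset Printing Implicit Defensive.
Import Order.TTheory GRing.Theory Num.Theory.

(* Sequences over Sigma_q are represented as seq nat (entries in [0, q-1]). *)

(* b-burst-deletion at position i (1-based, i in [1, n-b+1]):
   x_1..x_{i-1} x_{i+b} .. x_n *)
Definition burst_del (b i : nat) (x : seq nat) : seq nat :=
  take i.-1 x ++ drop (i.-1 + b) x.

Definition burst_dels1 (b : nat) (x : seq nat) : seq (seq nat) :=
  [seq burst_del b i x | i <- iota 1 ((size x).+1 - b)].

(* D_{t,b}(x) as a list (possibly with repetitions) of all results of t
   successive b-burst-deletions; D_{0,b}(x) = {x}. *)
Fixpoint burstD (t b : nat) (x : seq nat) : seq (seq nat) :=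
  match t with
  | 0 => [:: x]
  | t'.+1 => flatten [seq burstD t' b y | y <- burst_dels1 b x]
  end.

(* The b-cyclic sequence X^sigma_{m,q,b}: X_i = sigma + floor((i-1)/b) mod q. *)
Definition cyc_seq (sigma m q b : nat) : seq nat :=
  mkseq (fun j => (sigma + j %/ b) %% q) m.

Definition dqb (q b : nat) (m s : int) : nat :=
  if (s < 0)%R then 0
  else if (m < (b%:Z * s))%R then 0
  else if m == (b%:Z * s)%R then 1
  else size (undup (burstD `|s|%N b (cyc_seq 0 `|m|%N q b))).

From mathcomp Require Import all_boot all_order all_algebra.
Import Order.TTheory GRing.Theory Num.Theory.
From mathcomp Require Import zify.

Set Implicit Arguments.
Unset Strict Implicit.
Unset Printing Implicit Defensive.

(* The first symbol of a word obtained from x by t burst-deletions is x_(kb) for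
   some k <= t: the bursts lying before it delete exactly the prefix of length kb.
   The rest of the word is obtained by t - k burst-deletions from the suffix after
   position kb.  For the b-cyclic word, x_(kb) is the symbol k (mod q), and that
   suffix is again b-cyclic, only with a different phase and starting symbol, which
   do not change the counts.  Heads k and k + q give the same words (delete one more
   period), so classifying the results by their first symbol k < q gives the sum. *)

Lemma drop_cat_leq (T : Type) n (s1 s2 : seq T) : n <= size s1 ->
  drop n (s1 ++ s2) = drop n s1 ++ s2.
Proof.
move=> le_n_s1; rewrite drop_cat; case: ltnP => // ge_n_s1.
have -> : n = size s1 by lia.
by rewrite subnn drop0 drop_size.
Qed.

Lemma size_undup_le1 (T : eqType) (s : seq T) e :
  {in s, forall y, y = e} -> size (undup s) <= 1.
Proof.
move=> s_e; apply: (@uniq_leq_size _ _ [:: e] (undup_uniq s)) => y.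
by rewrite mem_undup mem_seq1 => /s_e ->.
Qed.

Lemma sum_count_partition (T : eqType) (s : seq T) n (P : nat -> pred T) :
  {in s, forall y, \sum_(k < n) P k y = 1} -> \sum_(k < n) count (P k) s = size s.
Proof.
elim: s => [|y s IHs] Ps /=; first by rewrite big1.
rewrite big_split /= Ps ?mem_head // IHs // => z sz.
by apply: Ps; rewrite in_cons sz orbT.
Qed.

Lemma sum_ord_eq1 n a : a < n -> \sum_(k < n) (a == k :> nat) = 1.
Proof.
move=> lt_a_n; rewrite (bigD1 (Ordinal lt_a_n)) //= eqxx big1 // => k /eqP neq_k.
by apply/eqP; rewrite eqb0; apply/eqP => eq_k; apply: neq_k; apply: val_inj.
Qed.

Section BurstDeletions.
Variable b : nat.

Lemma mem_burstDS t x y : y \in burstD t.+1 b x <->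
  exists2 p, p + b <= size x & y \in burstD t b (take p x ++ drop (p + b) x).
Proof.
split.
- move=> /flatten_mapP [z /mapP [i]]; rewrite mem_iota => /andP [i_gt0 i_lt] -> y_z.
  by exists i.-1; first lia.
- move=> [p le_pb y_del]; apply/flatten_mapP; exists (burst_del b p.+1 x) => //.
  by apply/mapP; exists p.+1; rewrite // mem_iota; apply/andP; split; lia.
Qed.

Lemma size_mem_burstD t x y : y \in burstD t b x -> size y + t * b = size x.
Proof.
elim: t x y => [|t IHt] x y; first by rewrite mem_seq1 => /eqP ->; rewrite addn0.
move=> /mem_burstDS [p le_pb /IHt]; rewrite size_cat size_take size_drop.
by case: ifP; lia.
Qed.

Lemma burstD_nonempty t x : t * b <= size x -> exists y, y \in burstD t b x.
Proof.
elim: t x => [|t IHt] x le_tb; first by exists x; rewrite mem_seq1.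
have [|y y_D] := IHt (drop b x); first by rewrite size_drop; lia.
by exists y; apply/mem_burstDS; exists 0; rewrite ?take0 //; lia.
Qed.

Lemma cons_mem_burstD t c x y : y \in burstD t b x -> c :: y \in burstD t b (c :: x).
Proof.
elim: t x y => [|t IHt] x y; first by rewrite !mem_seq1 => /eqP ->.
move=> /mem_burstDS [p le_pb y_D]; apply/mem_burstDS.
by exists p.+1 => /=; [lia | apply: IHt].
Qed.

Lemma mem_burstD_drop j t x y : j * b <= size x ->
  y \in burstD t b (drop (j * b) x) -> y \in burstD (t + j) b x.
Proof.
elim: j x y => [|j IHj] x y le_jb; first by rewrite drop0 addn0.
rewrite mulSn addnC -drop_drop => /IHj y_D; rewrite addnS; apply/mem_burstDS.
by exists 0; rewrite ?take0 //; [lia | apply: y_D; rewrite size_drop; lia].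
Qed.

Lemma head_mem_burstD t x c y : c :: y \in burstD t b x ->
  exists k, [/\ k <= t, k * b < size x, c = nth 0 x (k * b) &
                y \in burstD (t - k) b (drop (k * b).+1 x)].
Proof.
elim: t x y => [|t IHt] x y.
  by rewrite mem_seq1 => /eqP <-; exists 0; rewrite /= drop0 mem_seq1.
move=> /mem_burstDS [p le_pb /IHt [k [le_kt lt_kb ->]]].
have le_px : p <= size x by lia.
have size_del : size (take p x ++ drop (p + b) x) = size x - b.
  by rewrite size_cat size_take size_drop; case: ifP; lia.
rewrite size_del in lt_kb; rewrite nth_cat (size_takel le_px).
case: (ltnP (k * b) p) => [lt_kb_p | le_p_kb].
- rewrite nth_take // drop_cat_leq ?(size_takel le_px) // => y_D.
  exists k; rewrite subSn //; split => //; try lia.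
  apply/mem_burstDS; exists (p - (k * b).+1); first by rewrite size_drop; lia.
  by rewrite take_drop drop_drop subnK // addnAC subnK.
- rewrite drop_cat (size_takel le_px) ltnNge (leq_trans le_p_kb) //= drop_drop nth_drop => y_D.
  exists k.+1; rewrite !mulSn; split; try lia.
  + by congr nth; lia.
  + by move: y_D; rewrite subSS; congr (_ \in burstD _ b (drop _ x)); lia.
Qed.

Lemma nth_cons_mem_burstD t k x y : k <= t -> k * b < size x ->
  y \in burstD (t - k) b (drop (k * b).+1 x) -> nth 0 x (k * b) :: y \in burstD t b x.
Proof.
move=> le_kt lt_kb y_D; rewrite -(subnK le_kt); apply: mem_burstD_drop; first lia.
by rewrite (drop_nth 0) //; apply: cons_mem_burstD.
Qed.

End BurstDeletions.

Section CyclicWords.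
Variables q b : nat.
Hypotheses (b_gt0 : 0 < b) (q_gt0 : 0 < q).

(* The b-cyclic word started [r] positions into a block whose symbol is [sg];
   [cyc_seq 0 m q b] is [cyc_word 0 0 m], and its suffixes are again of this form. *)
Definition cyc_word r sg m := mkseq (fun j => (sg + (j + r) %/ b) %% q) m.

Definition nburstD r sg m s := size (undup (burstD s b (cyc_word r sg m))).

Lemma size_cyc_word r sg m : size (cyc_word r sg m) = m.
Proof. exact: size_mkseq. Qed.

Lemma nth_cyc_word_block r sg m k : k * b < m ->
  nth 0 (cyc_word r sg m) (k * b) = (sg + r %/ b + k) %% q.
Proof. by move=> lt_kb; rewrite nth_mkseq // divnMDl // addnA addnAC. Qed.

Lemma drop_cyc_word r sg m k :
  drop (k * b).+1 (cyc_word r sg m) = cyc_word r.+1 (sg + k) (m - (k * b).+1).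
Proof.
apply: (@eq_from_nth _ 0) => [|i]; first by rewrite size_drop !size_cyc_word.
rewrite size_drop size_cyc_word => lt_i; rewrite nth_drop !nth_mkseq; try lia.
by rewrite (_ : _ + i + r = k * b + (i + r.+1)) ?divnMDl ?addnA //; lia.
Qed.

Lemma nburstD_small r sg m s : m <= s * b -> nburstD r sg m s = (m == s * b).
Proof.
move=> le_m_sb; rewrite /nburstD; set D := burstD s b _.
have size_D y : y \in D -> size y + s * b = m by move/size_mem_burstD; rewrite size_cyc_word.
case: eqP => [eq_m_sb | neq_m_sb].
- have [y y_D] := @burstD_nonempty b s (cyc_word r sg m) ltac:(rewrite size_cyc_word; lia).
  apply/eqP; rewrite eqn_leq (@size_undup_le1 _ _ [::]) /=; last first.
    by move=> z /size_D size_z; apply/eqP; rewrite -size_eq0; apply/eqP; lia.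
  by move: y_D; rewrite -mem_undup; case: (undup D).
- case E: (undup D) => [|z l] //.
  by have := mem_head z l; rewrite -E mem_undup => /size_D; lia.
Qed.

Lemma eqn_modDl_small p k k' : k < q -> ((p + k') %% q == (p + k) %% q) = (k' %% q == k).
Proof. by move=> lt_kq; rewrite eqn_modDl (modn_small lt_kq). Qed.

Section Classification.
Variables (r sg m s : nat).
Hypothesis lt_sb_m : s * b < m.
Let x := cyc_word r sg m.
Let S := undup (burstD s b x).
Let head_is k (y : seq nat) := head 0 y == (sg + r %/ b + k) %% q.

Lemma mem_burstD_cyc_word_cons y : y \in burstD s b x -> exists c y', y = c :: y'.
Proof.
case: y => [|c y'] y_D; last by exists c, y'.
by move/size_mem_burstD: y_D; rewrite /x size_cyc_word => /= eq_m; exfalso; lia.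
Qed.

Lemma head_mem_burstD_cyc_word k c y : k < q -> c :: y \in burstD s b x ->
  c = (sg + r %/ b + k) %% q -> k <= s /\ y \in burstD (s - k) b (drop (k * b).+1 x).
Proof.
move=> lt_kq /head_mem_burstD [k' [le_k's]]; rewrite size_cyc_word => lt_k'b ->.
rewrite nth_cyc_word_block // => y_D /eqP; rewrite eqn_modDl_small // => /eqP mod_k'.
have [j def_k'] : exists j, k' = k + j * q by exists (k' %/ q); rewrite addnC -mod_k' -divn_eq.
split; first nia.
have -> : s - k = s - k' + j * q by nia.
apply: mem_burstD_drop; first by rewrite size_drop size_cyc_word; nia.
by rewrite drop_drop (_ : _ + _ = (k' * b).+1) //; nia.
Qed.

Lemma count_head_is k : k < q -> count (head_is k) S =
  if k <= s then nburstD r.+1 (sg + k) (m - (k * b).+1) (s - k) else 0.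
Proof.
move=> lt_kq; rewrite /nburstD -drop_cyc_word -/x; case: ifP => [le_ks | gt_ks].
- rewrite -size_filter -[in RHS](size_map (cons ((sg + r %/ b + k) %% q))).
  apply/perm_size/uniq_perm => [||y]; first exact: filter_uniq (undup_uniq _).
    by rewrite map_inj_uniq ?undup_uniq // => u v [].
  rewrite mem_filter mem_undup; apply/andP/mapP => [[head_y y_D] | [y' y'_D ->]].
  + have [c [y' def_y]] := mem_burstD_cyc_word_cons y_D.
    move: head_y y_D; rewrite def_y => /eqP /= def_c y_D.
    have [_ y'_D] := head_mem_burstD_cyc_word lt_kq y_D def_c.
    by exists y'; rewrite ?mem_undup ?def_c.
  + split; first exact: eqxx.
    have lt_kb : k * b < m by nia.
    rewrite -(nth_cyc_word_block r sg lt_kb); apply: nth_cons_mem_burstD => //.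
      by rewrite size_cyc_word.
    by rewrite -mem_undup.
- apply/eqP; rewrite eqn0Ngt -has_count; apply/hasPn => y; rewrite mem_undup => y_D.
  have [c [y' def_y]] := mem_burstD_cyc_word_cons y_D.
  apply/negP; move: y_D; rewrite def_y => y_D /eqP /= def_c.
  by have [le_ks _] := head_mem_burstD_cyc_word lt_kq y_D def_c; rewrite le_ks in gt_ks.
Qed.

Lemma sum_head_is y : y \in S -> \sum_(k < q) head_is k y = 1.
Proof.
rewrite mem_undup => y_D; have [c [y' def_y]] := mem_burstD_cyc_word_cons y_D.
move: y_D; rewrite def_y => /head_mem_burstD [k' [_]]; rewrite size_cyc_word => lt_k'b -> _.
rewrite /head_is /= nth_cyc_word_block //.
under eq_bigr => k _ do rewrite (eqn_modDl_small _ _ (ltn_ord k)).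
exact: sum_ord_eq1 (ltn_pmod _ q_gt0).
Qed.

Lemma nburstD_rec : nburstD r sg m s =
  \sum_(k < q) (if k <= s then nburstD r.+1 (sg + k) (m - (k * b).+1) (s - k) else 0).
Proof.
rewrite {1}/nburstD -/x -/S -(sum_count_partition sum_head_is).
by apply: eq_bigr => k _; rewrite count_head_is.
Qed.

End Classification.

Lemma nburstD_phase_free m : forall r sg s, nburstD r sg m s = nburstD 0 0 m s.
Proof.
elim/ltn_ind: m => m IHm r sg s.
have [le_m_sb | lt_sb_m] := leqP m (s * b); first by rewrite !nburstD_small.
rewrite !nburstD_rec //; apply: eq_bigr => k _; case: ifP => // _.
by rewrite IHm ?(IHm _ _ 1); lia.
Qed.
End CyclicWords.

Lemma dqb_nat q b m s : 0 < b -> 0 < q -> dqb q b m%:Z s%:Z = nburstD q b 0 0 m s.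
Proof.
move=> b_gt0 q_gt0; rewrite /dqb /= -PoszM ltz_nat eqz_nat (mulnC b s).
have -> : cyc_seq 0 m q b = cyc_word q b 0 0 m by apply: eq_mkseq => j; rewrite addn0.
case: ltnP => [lt_m_sb | le_sb_m]; first by rewrite nburstD_small ?(ltnW lt_m_sb) ?ltn_eqF.
by case: eqP => [->|_] //; rewrite nburstD_small ?eqxx.
Qed.

Theorem lemma4p8 (q b t n : nat) :
  2 <= q -> 1 <= t -> 1 <= b -> b * t + 1 <= n ->
  dqb q b n%:Z t%:Z =
  \sum_(i < q) dqb q b (n%:Z - (i * b)%:Z - 1)%R (t%:Z - i%:Z)%R.
Proof.
move=> q_ge2 t_ge1 b_gt0 le_bt_n; have q_gt0 : 0 < q by lia.
rewrite dqb_nat // nburstD_rec //; last by lia.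
apply: eq_bigr => i _; case: ifP => [le_it | lt_ti].
- have -> : (n%:Z - (i * b)%:Z - 1 = (n - (i * b).+1)%:Z)%R by nia.
  have -> : (t%:Z - i%:Z = (t - i)%:Z)%R by lia.
  by rewrite dqb_nat // nburstD_phase_free.
- by rewrite /dqb (_ : t%:Z - i%:Z < 0)%R //; lia.
Qed.
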